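(* For any persuasive signaling scheme $\varphi$, there exists an identity-independent signaling scheme $\widetilde{\varphi}$ that is persuasive and has $\mathrm{Cost}(\widetilde{\varphi})=\mathrm{Cost}(\varphi)$.
   Context: Setting. $V$ is a finite set of $n$ task types and $W=(W_{u,v})_{u,v\in V}$ is a symmetric matrix with entries in $[0,1]$ and $W_{v,v}=1$. There are $n$ agents; the type profile $t=(t_1,\dots,t_n)$ is a uniformly random bijection $[n]\to V$. A signaling scheme with finite signal space $\Sigma\subset[0,1]$ is a map $\varphi$ assigning to each bijection $t$ a distribution $\varphi(t)$ on $\Sigma^V$; given $t$, $s=(s_v)_{v\in V}\sim\varphi(t)$ is drawn and agent $i$ privately receives $s_{t_i}$. For agent $i$, a signal $\theta\in\Sigma$ with $\Pr[s_{t_i}=\theta]>0$ and $x\ge0$, let $Q_i(x\mid\theta)=\mathbb{E}\big[x+\sum_{v'\neq t_i}W_{t_i,v'}s_{v'}\,\big|\,s_{t_i}=\theta\big]$ (over the joint law of $t,s$). The scheme is persuasive if for every agent $i$ and every such $\theta$: $Q_i(\theta\mid\theta)\ge1$ and $\theta=\min\{x\ge0:Q_i(x\mid\theta)\ge1\}$. $\mathrm{Cost}(\varphi)=\mathbb{E}_{t,\,s\sim\varphi(t)}[\|s\|_1]$. The scheme is identity-independent if there is a distribution $\mathcal{D}_\varphi$ on $\Sigma^V$ with $\varphi(t)=\mathcal{D}_\varphi$ for every bijection $t$. *)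

From mathcomp Require Import all_boot all_order all_algebra.
From mathcomp Require Import reals.
Set Implicit Arguments. Unset Strict Implicit. Unset Printing Implicit Defensive.
Import Order.TTheory GRing.Theory Num.Theory.
Local Open Scope ring_scope.

Section Signaling.
Variables (R : realType) (V : finType).

(* agents are 'I_n with n = #|V|; a type profile is a map agents -> types *)
Definition profile := {ffun 'I_#|V| -> V}.

(* the bijections [n] -> V; the type profile is uniform over this set *)
Definition bijs : {set profile} := [set t : profile | injectiveb t].

Definition valid_W (W : V -> V -> R) : Prop :=
  (forall u v, W u v = W v u) /\ (forall u v, 0 <= W u v <= 1) /\
  (forall v, W v v = 1).

Variable (S : finType).
(* A signaling scheme with finite signal space Sigma = image of sigma in [0,1]:
   phi t s = probability of the signal vector (fun v => sigma (s v)) given t. *)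
Definition is_distr (D : {ffun V -> S} -> R) : Prop :=
  (forall s, 0 <= D s) /\ \sum_(s : {ffun V -> S}) D s = 1.

Definition is_scheme (sigma : S -> R) (phi : profile -> {ffun V -> S} -> R) : Prop :=
  (forall a, 0 <= sigma a <= 1) /\ (forall t, t \in bijs -> is_distr (phi t)).

Definition identity_independent (phi : profile -> {ffun V -> S} -> R) : Prop :=
  exists D : {ffun V -> S} -> R, is_distr D /\
    forall t, t \in bijs -> forall s, phi t s = D s.

Variables (W : V -> V -> R) (sigma : S -> R) (phi : profile -> {ffun V -> S} -> R).

Definition joint (t : profile) (s : {ffun V -> S}) : R :=
  phi t s / #|bijs|%:R.

Definition prob_sig (i : 'I_#|V|) (theta : R) : R :=
  \sum_(t in bijs) \sum_(s : {ffun V -> S}) (sigma (s (t i)) == theta)%:R * joint t s.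

Definition Q (i : 'I_#|V|) (x theta : R) : R :=
  (\sum_(t in bijs) \sum_(s : {ffun V -> S}) (sigma (s (t i)) == theta)%:R * joint t s *
      (x + \sum_(v' | v' != t i) W (t i) v' * sigma (s v'))) / prob_sig i theta.

Definition persuasive : Prop :=
  forall (i : 'I_#|V|) (theta : R), 0 < prob_sig i theta ->
    1 <= Q i theta theta /\
    (* theta = min { x >= 0 : Q_i(x|theta) >= 1 } *)
    0 <= theta /\ (forall x, 0 <= x -> 1 <= Q i x theta -> theta <= x).

Definition cost : R :=
  \sum_(t in bijs) \sum_(s : {ffun V -> S}) joint t s * \sum_v `|sigma (s v)|.

End Signaling.

(* Averaging the scheme over all type profiles, D(s) = (1/|bijs|) sum_t phi(t)(s),
   gives an identity-independent scheme with the same cost.  Since the uniform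
   profile makes every agent's type uniformly distributed, the numerator and the
   denominator of agent i's conditional expectation under D are the averages over
   the agents j of the corresponding quantities under phi.  Persuasiveness then
   transfers by the mediant inequality: if a_j >= p_j for every agent with
   p_j > 0, then sum a_j >= sum p_j, and strictly so when all those inequalities
   are strict.  No property of W is needed. *)
From mathcomp Require Import all_boot all_order all_algebra all_fingroup.
From mathcomp Require Import reals.
Set Implicit Arguments. Unset Strict Implicit. Unset Printing Implicit Defensive.
Import Order.TTheory GRing.Theory Num.Theory.
Local Open Scope ring_scope.

Section BijectionSums.
Variable V : finType.

Definition swap_agents (i j : 'I_#|V|) (t : profile V) : profile V :=
  [ffun k => t (tperm i j k)].

Lemma swap_agentsK i j : involutive (swap_agents i j).
Proof. by move=> t; apply/ffunP=> k; rewrite !ffunE tpermK. Qed.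

Lemma swap_agents_bij i j t : (swap_agents i j t \in bijs V) = (t \in bijs V).
Proof.
suff bij_swap u : u \in bijs V -> swap_agents i j u \in bijs V.
  by apply/idP/idP => [/bij_swap|/bij_swap //]; rewrite swap_agentsK.
rewrite !inE => /injectiveP inj_u; apply/injectiveP => a b.
by rewrite !ffunE => /inj_u /perm_inj.
Qed.

Lemma bijs_gt0 : (0 < #|bijs V|)%N.
Proof.
apply/card_gt0P; exists [ffun k => enum_val k].
by rewrite inE; apply/injectiveP => a b; rewrite !ffunE => /enum_val_inj.
Qed.

Lemma sum_bij_comp (M : nmodType) (g : V -> M) (t : profile V) :
  t \in bijs V -> \sum_j g (t j) = \sum_v g v.
Proof.
rewrite inE => /injectiveP inj_t.
have /onW_bij bij_t : bijective t by apply: inj_card_bij inj_t _; rewrite card_ord.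
by rewrite [RHS](reindex _ (bij_t xpredT)).
Qed.

Lemma sum_bijs_agent (M : nmodType) (g : V -> M) (i j : 'I_#|V|) :
  \sum_(t in bijs V) g (t i) = \sum_(t in bijs V) g (t j).
Proof.
rewrite (reindex_inj (inv_inj (swap_agentsK i j))) /=.
apply: eq_big => [t|t _]; first by rewrite swap_agents_bij.
by rewrite ffunE tpermL.
Qed.

Lemma sum_bijs_agentMn (M : nmodType) (g : V -> M) (i : 'I_#|V|) :
  (\sum_(t in bijs V) g (t i)) *+ #|V| = (\sum_v g v) *+ #|bijs V|.
Proof.
rewrite -[X in _ *+ X]card_ord -!sumr_const.
under eq_bigr => j _ do rewrite (sum_bijs_agent g i j).
by rewrite exchange_big; apply: eq_bigr => t; apply: sum_bij_comp.
Qed.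

End BijectionSums.

Section Mediant.
Variables (R : numDomainType) (I : finType) (p a : I -> R).
Hypotheses (p_ge0 : forall j, 0 <= p j) (a_null : forall j, p j = 0 -> a j = 0).

Lemma mediant_ler : (forall j, 0 < p j -> p j <= a j) -> \sum_j p j <= \sum_j a j.
Proof.
move=> le_pa; apply: ler_sum => j _.
move: (p_ge0 j); rewrite le_eqVlt => /orP[/eqP p0|/le_pa //].
by rewrite (a_null (esym p0)) -p0.
Qed.

Lemma mediant_ltr : (exists j, 0 < p j) -> (forall j, 0 < p j -> a j < p j) ->
  \sum_j a j < \sum_j p j.
Proof.
move=> [j0 p_j0_gt0] lt_ap.
have supportE (f : I -> R) : (forall j, p j = 0 -> f j = 0) ->
    \sum_j f j = \sum_(j | 0 < p j) f j.
  move=> f_null; symmetry; apply: big_rmcond => j /=.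
  by rewrite lt0r p_ge0 andbT negbK => /eqP /f_null.
rewrite (supportE a a_null) (supportE p (fun _ => id)).
by apply: ltr_sum lt_ap; apply/hasP; exists j0; rewrite ?mem_index_enum.
Qed.

End Mediant.

Section Averaging.
Variables (R : realType) (V S : finType) (sigma : S -> R).

Definition event_expect (ph : profile V -> {ffun V -> S} -> R) (i : 'I_#|V|)
    (th : R) (G : V -> {ffun V -> S} -> R) : R :=
  \sum_(t in bijs V) \sum_(s : {ffun V -> S})
    (sigma (s (t i)) == th)%:R * joint ph t s * G (t i) s.

Lemma prob_sigE ph i th :
  prob_sig sigma ph i th = event_expect ph i th (fun _ _ => 1).
Proof.
by apply: eq_bigr => t _; apply: eq_bigr => s _; rewrite mulr1.
Qed.

Lemma QE W ph i x th :
  Q W sigma ph i x th =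
  event_expect ph i th (fun v s => x + \sum_(v' | v' != v) W v v' * sigma (s v'))
    / prob_sig sigma ph i th.
Proof. by []. Qed.

Variable phi : profile V -> {ffun V -> S} -> R.

Definition avg_distr (s : {ffun V -> S}) : R :=
  (\sum_(u in bijs V) phi u s) / #|bijs V|%:R.

Definition avg_scheme : profile V -> {ffun V -> S} -> R := fun _ => avg_distr.

Lemma bijs_neq0 : #|bijs V|%:R != 0 :> R.
Proof. by rewrite pnatr_eq0 -lt0n bijs_gt0. Qed.

Lemma event_expect_avgMn i th G :
  event_expect avg_scheme i th G *+ #|V| = \sum_j event_expect phi j th G.
Proof.
pose g (s : {ffun V -> S}) v := (sigma (s v) == th)%:R * G v s.
have weightE (ph : profile V -> {ffun V -> S} -> R) (t : profile V)
    (s : {ffun V -> S}) (j : 'I_#|V|) :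
    (sigma (s (t j)) == th)%:R * joint ph t s * G (t j) s = joint ph t s * g s (t j).
  by rewrite /g [_ * joint _ _ _]mulrC -mulrA.
transitivity (\sum_s avg_distr s * \sum_v g s v).
  rewrite /event_expect exchange_big -sumrMnl; apply: eq_bigr => s _.
  under eq_bigr => t _ do rewrite weightE.
  rewrite /joint /avg_scheme -mulr_sumr -mulrnAr sum_bijs_agentMn.
  by rewrite -[(\sum_v g s v) *+ _]mulr_natr mulrCA divfK ?bijs_neq0 // mulrC.
symmetry; rewrite /event_expect exchange_big /=.
under eq_bigr => t tB.
  rewrite exchange_big /=.
  under eq_bigr => s _ do rewrite (eq_bigr _ (fun j _ => weightE phi t s j)).
  under eq_bigr => s _ do rewrite -mulr_sumr (sum_bij_comp (g s) tB).
  over.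
by rewrite exchange_big; apply: eq_bigr => s _; rewrite /avg_distr -!mulr_suml.
Qed.

Lemma event_expect_avg i th G :
  event_expect avg_scheme i th G = (\sum_j event_expect phi j th G) / #|V|%:R.
Proof.
have n_neq0 : #|V|%:R != 0 :> R by rewrite pnatr_eq0 -lt0n (leq_ltn_trans _ (ltn_ord i)).
by apply: (mulIf n_neq0); rewrite divfK // mulr_natr event_expect_avgMn.
Qed.

Lemma cost_avg : cost sigma avg_scheme = cost sigma phi.
Proof.
rewrite /cost /joint /avg_scheme sumr_const -(mulr_natl (\sum_s _)) mulr_sumr.
under eq_bigr => s _ do rewrite mulrA mulrCA divff ?bijs_neq0 // mulr1 /avg_distr.
by rewrite exchange_big; apply: eq_bigr => t _; rewrite mulr_suml mulr_suml.
Qed.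

Hypothesis phi_ge0 : forall t, t \in bijs V -> forall s, 0 <= phi t s.

Lemma avg_distr_is_distr :
  (forall t, t \in bijs V -> \sum_s phi t s = 1) -> is_distr avg_distr.
Proof.
move=> phi_sum1; split=> [s|].
  by rewrite divr_ge0 ?ler0n //; apply: sumr_ge0 => t tB; apply: phi_ge0.
rewrite /avg_distr -mulr_suml exchange_big /= (eq_bigr _ phi_sum1).
by rewrite sumr_const -mulr_natl mulr1 divff ?bijs_neq0.
Qed.

Lemma event_weight_ge0 i th t (s : {ffun V -> S}) :
  t \in bijs V -> 0 <= (sigma (s (t i)) == th)%:R * joint phi t s.
Proof. by move=> tB; rewrite mulr_ge0 ?ler0n // divr_ge0 ?ler0n ?phi_ge0. Qed.

Lemma event_expect1_ge0 i th : 0 <= event_expect phi i th (fun _ _ => 1).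
Proof.
by apply: sumr_ge0 => t tB; apply: sumr_ge0 => s _; rewrite mulr1 event_weight_ge0.
Qed.

Lemma event_expect_null i th G :
  event_expect phi i th (fun _ _ => 1) = 0 -> event_expect phi i th G = 0.
Proof.
have term_ge0 t (s : {ffun V -> S}) : t \in bijs V ->
    0 <= (sigma (s (t i)) == th)%:R * joint phi t s * 1.
  by rewrite mulr1; apply: event_weight_ge0.
move=> null; apply: big1 => t tB; apply: big1 => s _.
have := psumr_eq0P (fun u uB => sumr_ge0 _ (fun s _ => term_ge0 u s uB)) null tB.
move=> /(psumr_eq0P (fun s _ => term_ge0 t s tB))/(_ s isT).
by rewrite mulr1 => ->; rewrite mul0r.
Qed.

Lemma avg_scheme_persuasive W :
  persuasive W sigma phi -> persuasive W sigma avg_scheme.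
Proof.
move=> pers_phi i th.
set F := fun x v s => x + \sum_(v' | v' != v) W v v' * sigma (s v').
pose p j := event_expect phi j th (fun _ _ => 1).
pose a x j := event_expect phi j th (F x).
have p_ge0 j : 0 <= p j by apply: event_expect1_ge0.
have a_null x j : p j = 0 -> a x j = 0 by apply: event_expect_null.
have pers_j j : 0 < p j -> [/\ p j <= a th j, 0 <= th &
    forall x, 0 <= x -> p j <= a x j -> th <= x].
  move=> p_gt0; have := pers_phi j th; rewrite prob_sigE => /(_ p_gt0).
  rewrite !QE prob_sigE ler_pdivlMr // mul1r => -[? [? min_th]]; split=> // x x0.
  by move=> le_pa; apply: min_th; rewrite // QE prob_sigE ler_pdivlMr // mul1r.
have n_gt0 : 0 < #|V|%:R :> R by rewrite ltr0n (leq_ltn_trans _ (ltn_ord i)).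
rewrite prob_sigE event_expect_avg => avg_gt0.
have P_gt0 : 0 < \sum_j p j by move: avg_gt0; rewrite pmulr_lgt0 ?invr_gt0.
have [j0 p_j0_gt0] : exists j, 0 < p j.
  have sum_neq0 : \sum_j p j <> 0 by move/eqP; rewrite gt_eqF.
  by have [j /andP[_ ?]] := psumr_neq0P (fun j _ => p_ge0 j) sum_neq0; exists j.
have QavgP x : (1 <= Q W sigma avg_scheme i x th) = (\sum_j p j <= \sum_j a x j).
  rewrite QE prob_sigE !event_expect_avg invf_div mulrA divfK ?lt0r_neq0 //.
  by rewrite ler_pdivlMr // mul1r.
split; first by rewrite QavgP; apply: (mediant_ler p_ge0 (a_null th)) => j /pers_j[].
split; first by case: (pers_j j0 p_j0_gt0).
move=> x x0; rewrite QavgP => le_pa; rewrite leNgt; apply/negP => lt_x.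
suff : \sum_j a x j < \sum_j p j by rewrite ltNge le_pa.
apply: (mediant_ltr p_ge0 (a_null x)) => [|j /pers_j[_ _ min_th]]; first by exists j0.
by rewrite ltNge; apply/negP => /(min_th x x0); rewrite leNgt lt_x.
Qed.

End Averaging.

Theorem lemma2p1 (R : realType) (V : finType) (W : V -> V -> R)
  (hW : valid_W W) (S : finType) (sigma : S -> R)
  (phi : profile V -> {ffun V -> S} -> R) :
  is_scheme sigma phi -> persuasive W sigma phi ->
  exists (S' : finType) (sigma' : S' -> R)
         (phi' : profile V -> {ffun V -> S'} -> R),
    [/\ is_scheme sigma' phi', identity_independent phi',
        persuasive W sigma' phi' & cost sigma' phi' = cost sigma phi].
Proof.
move=> [sigma01 phi_distr] pers_phi.
have phi_ge0 t (tB : t \in bijs V) := (phi_distr t tB).1.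
have phi_sum1 t (tB : t \in bijs V) := (phi_distr t tB).2.
have avg_is_distr := avg_distr_is_distr phi_ge0 phi_sum1.
exists S, sigma, (avg_scheme phi); split.
- by split=> // t _.
- by exists (avg_distr phi).
- exact: avg_scheme_persuasive.
- exact: cost_avg.
Qed.
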